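(* Let $f:\mathbb{R}^d\to\mathbb{R}$ be $C^2$ with $\nabla^2 f(x)\succ0$ for all $x$, and suppose there is $L_{\text{alt}}>0$ with $$f(x+h)-f(x)\le\langle\nabla f(x),h\rangle+\tfrac12\|h\|_x^2+\tfrac{L_{\text{alt}}}{6}\|h\|_x^3\quad\forall x,h\in\mathbb{R}^d.$$ Let $L_{\text{est}}\ge L_{\text{alt}}$ and let $x_{k+1}$ be the AICN iterate from $x_k$ with $\nabla f(x_k)\neq0$; write $g=\|\nabla f(x_k)\|_{x_k}^*$. Then - if $g\ge\frac{4}{L_{\text{est}}}$: $f(x_{k+1})-f(x_k)\le-\frac{1}{2\sqrt{L_{\text{est}}}}g^{3/2}$; - if $g\le\frac{4}{L_{\text{est}}}$: $f(x_{k+1})-f(x_k)\le-\frac14g^2$; - if $0<c_1\le1$ and $g\ge\frac{4c_1}{L_{\text{est}}}$: $f(x_{k+1})-f(x_k)\le-\frac{\sqrt{c_1}}{2\sqrt{L_{\text{est}}}}g^{3/2}$.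
   Context: Local norms: $\|h\|_x=\langle\nabla^2 f(x)h,h\rangle^{1/2}$, $\|g\|_x^*=\langle g,[\nabla^2 f(x)]^{-1}g\rangle^{1/2}$. AICN step with parameter $L_{\text{est}}>0$: $x_{k+1}=x_k-\alpha_k[\nabla^2 f(x_k)]^{-1}\nabla f(x_k)$ with $\alpha_k=\frac{-1+\sqrt{1+2L_{\text{est}}\|\nabla f(x_k)\|_{x_k}^*}}{L_{\text{est}}\|\nabla f(x_k)\|_{x_k}^*}$. *)

From HB Require Import structures.
From mathcomp Require Import all_boot all_order all_algebra.
From mathcomp Require Import all_classical all_reals all_analysis.
Set Implicit Arguments. Unset Strict Implicit. Unset Printing Implicit Defensive.
Import Order.TTheory GRing.Theory Num.Theory.
Import numFieldNormedType.Exports.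
Local Open Scope ring_scope.

Definition dotv (R : realType) (d : nat) (u v : 'cV[R]_d) : R := (u^T *m v) 0 0.

Definition C2_with (R : realType) (d : nat) (f : 'cV[R]_d -> R)
  (grad : 'cV[R]_d -> 'cV[R]_d) (hess : 'cV[R]_d -> 'M[R]_d) : Prop :=
  [/\ forall x, differentiable f x,
      forall x h, 'd f x h = dotv (grad x) h,
      forall x, differentiable grad x,
      forall x h, 'd grad x h = hess x *m h
    & continuous hess].

Definition hess_pd (R : realType) (d : nat) (hess : 'cV[R]_d -> 'M[R]_d) : Prop :=
  forall x (h : 'cV[R]_d), h != 0 -> 0 < dotv (hess x *m h) h.

Definition lnorm (R : realType) (d : nat) (hess : 'cV[R]_d -> 'M[R]_d) (x h : 'cV[R]_d) : R :=
  Num.sqrt (dotv (hess x *m h) h).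

Definition dnorm (R : realType) (d : nat) (hess : 'cV[R]_d -> 'M[R]_d) (x g : 'cV[R]_d) : R :=
  Num.sqrt (dotv g (invmx (hess x) *m g)).

Definition aicn_alpha (R : realType) (Lest G : R) : R :=
  (-1 + Num.sqrt (1 + 2 * Lest * G)) / (Lest * G).

Definition aicn_step (R : realType) (d : nat) (grad : 'cV[R]_d -> 'cV[R]_d)
  (hess : 'cV[R]_d -> 'M[R]_d) (Lest : R) (x : 'cV[R]_d) : 'cV[R]_d :=
  x - aicn_alpha Lest (dnorm hess x (grad x)) *: (invmx (hess x) *m grad x).

From HB Require Import structures.
From mathcomp Require Import all_boot all_order all_algebra.
From mathcomp Require Import all_classical all_reals all_analysis.
From mathcomp Require Import ring lra.

(* Let g be the dual norm of the gradient and y = H^-1 grad f(x), so that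
   <grad f(x), y> = g^2 and ||t y||_x = |t| g.  The AICN step size
   a = 2 / (1 + sqrt (1 + 2 L g)) is the positive root of L g a^2 + 2 a = 2;
   hence a <= 1 and L (a g)^3 / 6 = a (1 - a) g^2 / 3, and the cubic upper
   bound at h = -a y yields f(x_k+1) - f(x_k) <= -a g^2 / 2.  It remains to
   bound a from below: a >= 1/2 when L g <= 4, and a sqrt (L g) >= sqrt c1
   when L g >= 4 c1. *)

Set Implicit Arguments.
Unset Strict Implicit.
Unset Printing Implicit Defensive.

Import Order.TTheory GRing.Theory Num.Theory.
Import numFieldNormedType.Exports.
Local Open Scope ring_scope.

Section AicnStepSize.
Variables (R : realType) (L g : R).
Hypotheses (L_gt0 : 0 < L) (g_gt0 : 0 < g).

Local Notation a := (aicn_alpha L g).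
Local Notation s := (Num.sqrt (1 + 2 * L * g)).

Let Lg_gt0 : 0 < L * g. Proof. exact: mulr_gt0. Qed.

Let sqr_s : s ^+ 2 = 1 + 2 * L * g.
Proof. by rewrite sqr_sqrtr // -mulrA addr_ge0 // mulr_ge0 // ltW. Qed.

Let s_gt1 : 1 < s.
Proof.
have := sqrtr_ge0 (1 + 2 * L * g); have := sqr_s; have := Lg_gt0.
by rewrite -mulrA; nra.
Qed.

Lemma aicn_alpha_gt0 : 0 < a.
Proof. by rewrite /aicn_alpha divr_gt0 //; have := s_gt1; lra. Qed.

Let alpha_mulLg : a * (L * g) = s - 1.
Proof. by rewrite /aicn_alpha divfK ?gt_eqF //; lra. Qed.

Lemma aicn_alpha_sqrt : a * (s + 1) = 2.
Proof.
have aLg := alpha_mulLg.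
apply: (mulIf (x := L * g)); first by rewrite gt_eqF.
by rewrite mulrAC aLg; have := sqr_s; nra.
Qed.

Lemma aicn_alpha_root : L * g * a ^+ 2 = 2 * (1 - a).
Proof.
have -> : L * g * a ^+ 2 = a * (a * (L * g)) by ring.
by rewrite alpha_mulLg; have := aicn_alpha_sqrt; lra.
Qed.

Lemma aicn_model_le (La : R) : 0 <= La <= L ->
  - a * g ^+ 2 + 2^-1 * (a * g) ^+ 2 + La / 6 * (a * g) ^+ 3 <= - (a * g ^+ 2) / 2.
Proof.
move=> /andP[La_ge0 LaL].
have a_gt0 := aicn_alpha_gt0; have a_root := aicn_alpha_root.
have a_le1 : a <= 1 by have := mulr_ge0 (ltW Lg_gt0) (sqr_ge0 a); nra.
have cubic : La / 6 * (a * g) ^+ 3 <= g ^+ 2 * a * (1 - a) / 3.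
  have -> : g ^+ 2 * a * (1 - a) / 3 = L / 6 * (a * g) ^+ 3.
    have -> : L / 6 * (a * g) ^+ 3 = g ^+ 2 * a * (L * g * a ^+ 2) / 6 by ring.
    by rewrite a_root; field.
  by apply: ler_wpM2r; [rewrite exprn_ge0 // mulr_ge0 // ltW | lra].
have : 0 <= g ^+ 2 * a * (1 - a) by rewrite mulr_ge0 ?subr_ge0 // mulr_ge0 ?sqr_ge0 // ltW.
have -> : (a * g) ^+ 2 = g ^+ 2 * a * a by ring.
lra.
Qed.

Lemma aicn_alpha_ge_half : L * g <= 4 -> 2^-1 <= a.
Proof.
move=> Lg_le4; have s_le3 : s <= 3 by have := sqr_s; rewrite -mulrA; nra.
by have := aicn_alpha_sqrt; have := aicn_alpha_gt0; nra.
Qed.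

Lemma aicn_alpha_ge_sqrt (c : R) : 0 < c <= 1 -> 4 * c <= L * g ->
  Num.sqrt c <= a * Num.sqrt (L * g).
Proof.
move=> /andP[c_gt0 c_le1] cLg.
set u := Num.sqrt c; set p := Num.sqrt (L * g).
have u_gt0 : 0 < u by rewrite sqrtr_gt0.
have sqr_u : u ^+ 2 = c by rewrite sqr_sqrtr // ltW.
have sqr_p : p ^+ 2 = L * g by rewrite sqr_sqrtr // ltW.
have p_ge0 : 0 <= p := sqrtr_ge0 _.
have s_ge0 : 0 <= s := sqrtr_ge0 _.
have u_le1 : u <= 1 by nra.
have p_ge2u : 2 * u <= p by nra.
(* squaring [u s <= 2 p - u] reduces it to [2 u <= p (2 - u^2)] *)
have us_le : u * s <= 2 * p - u.
  have : 2 * u <= p * (2 - u ^+ 2) by nra.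
  have := sqr_s; rewrite -mulrA; nra.
have := aicn_alpha_sqrt; have := aicn_alpha_gt0; nra.
Qed.

Lemma sqrt_rate_le_aicn_gain (c : R) : 0 < c <= 1 -> 4 * c / L <= g ->
  Num.sqrt c / (2 * Num.sqrt L) * (g * Num.sqrt g) <= a * g ^+ 2 / 2.
Proof.
move=> c01 cg; have cLg : 4 * c <= L * g by move: cg; rewrite ler_pdivrMr // (mulrC g).
have := aicn_alpha_ge_sqrt c01 cLg; rewrite (sqrtrM _ (ltW L_gt0)).
set t := Num.sqrt L; set r := Num.sqrt g => u_le.
have t_gt0 : 0 < t by rewrite sqrtr_gt0.
have sqr_r : r ^+ 2 = g by rewrite sqr_sqrtr // ltW.
have gr_ge0 : 0 <= g * r by rewrite mulr_ge0 ?sqrtr_ge0 // ltW.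
have -> : a * g ^+ 2 / 2 = a * (t * r) / (2 * t) * (g * r).
  by rewrite -sqr_r; field; rewrite gt_eqF.
by rewrite ler_wpM2r // ler_pM2r // invr_gt0 mulr_gt0.
Qed.

End AicnStepSize.

Section NewtonDirection.
Variables (R : realType) (d : nat).
Implicit Types (u v : 'cV[R]_d) (A : 'M[R]_d).

Lemma dotvZl (t : R) u v : dotv (t *: u) v = t * dotv u v.
Proof. by rewrite /dotv linearZ /= -scalemxAl mxE. Qed.

Lemma dotvZr (t : R) u v : dotv u (t *: v) = t * dotv u v.
Proof. by rewrite /dotv -scalemxAr mxE. Qed.

Lemma dotv0l v : dotv 0 v = 0.
Proof. by rewrite /dotv trmx0 mul0mx mxE. Qed.

Lemma posdef_unitmx A : (forall h, h != 0 -> 0 < dotv (A *m h) h) -> A \in unitmx.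
Proof.
move=> A_pd; rewrite unitmxE unitfE -det_tr; apply/negP => /det0P[v v_neq0 vA0].
have Av0 : A *m v^T = 0 by rewrite -[A]trmxK -trmx_mul vA0 trmx0.
have vT_neq0 : v^T != 0.
  by apply: contra v_neq0 => /eqP/(congr1 trmx); rewrite trmxK trmx0 => ->.
by have := A_pd _ vT_neq0; rewrite Av0 dotv0l ltxx.
Qed.

Variable hess : 'cV[R]_d -> 'M[R]_d.
Hypothesis hess_posdef : hess_pd hess.

Lemma hess_unitmx x : hess x \in unitmx.
Proof. exact: posdef_unitmx (hess_posdef x). Qed.

Lemma dnorm_gt0 x v : v != 0 -> 0 < dnorm hess x v.
Proof.
move=> v_neq0; rewrite sqrtr_gt0.
have y_neq0 : invmx (hess x) *m v != 0.
  by apply: contra v_neq0 => /eqP y0; rewrite -(mulKVmx (hess_unitmx x) v) y0 mulmx0.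
by have := hess_posdef x y_neq0; rewrite mulKVmx ?hess_unitmx.
Qed.

Lemma sqr_dnorm x v : v != 0 -> dnorm hess x v ^+ 2 = dotv v (invmx (hess x) *m v).
Proof. by move=> v_neq0; rewrite sqr_sqrtr // ltW // -sqrtr_gt0 dnorm_gt0. Qed.

Lemma lnorm_newton x v (t : R) :
  lnorm hess x (t *: (invmx (hess x) *m v)) = `|t| * dnorm hess x v.
Proof.
rewrite /lnorm -scalemxAr mulKVmx ?hess_unitmx // dotvZl dotvZr mulrA -expr2.
by rewrite sqrtrM ?sqr_ge0 // sqrtr_sqr.
Qed.

End NewtonDirection.

Definition cubic_upper_bound (R : realType) (d : nat) (f : 'cV[R]_d -> R)
    (grad : 'cV[R]_d -> 'cV[R]_d) (hess : 'cV[R]_d -> 'M[R]_d) (La : R) : Prop :=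
  forall x h, f (x + h) - f x <= dotv (grad x) h + 2^-1 * lnorm hess x h ^+ 2
                                 + La / 6 * lnorm hess x h ^+ 3.

Lemma aicn_step_decrease (R : realType) (d : nat) (f : 'cV[R]_d -> R)
    (grad : 'cV[R]_d -> 'cV[R]_d) (hess : 'cV[R]_d -> 'M[R]_d) (La L : R)
    (x : 'cV[R]_d) :
  hess_pd hess -> cubic_upper_bound f grad hess La -> 0 <= La <= L -> 0 < L ->
  grad x != 0 ->
  f (aicn_step grad hess L x) - f x
    <= - (aicn_alpha L (dnorm hess x (grad x)) * dnorm hess x (grad x) ^+ 2) / 2.
Proof.
move=> hess_posdef f_cubic La_le L_gt0 grad_neq0.
set g := dnorm hess x (grad x).
have g_gt0 : 0 < g := dnorm_gt0 hess_posdef x grad_neq0.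
set a := aicn_alpha L g; have a_gt0 : 0 < a := aicn_alpha_gt0 L_gt0 g_gt0.
set y := invmx (hess x) *m grad x.
have -> : aicn_step grad hess L x = x + (- a) *: y by rewrite /aicn_step scaleNr.
have := f_cubic x ((- a) *: y).
rewrite lnorm_newton // normrN gtr0_norm // dotvZr -sqr_dnorm //.
move/le_trans; apply; exact: aicn_model_le.
Qed.

Theorem lemma11 (R : realType) (d : nat) (f : 'cV[R]_d -> R)
  (grad : 'cV[R]_d -> 'cV[R]_d) (hess : 'cV[R]_d -> 'M[R]_d)
  (Lalt Lest : R) (xk : 'cV[R]_d) :
  C2_with f grad hess ->
  hess_pd hess ->
  0 < Lalt ->
  (forall x h : 'cV[R]_d,
      f (x + h) - f x <= dotv (grad x) h + 2^-1 * lnorm hess x h ^+ 2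
                         + Lalt / 6 * lnorm hess x h ^+ 3) ->
  Lalt <= Lest ->
  grad xk != 0 ->
  let g := dnorm hess xk (grad xk) in
  let xk1 := aicn_step grad hess Lest xk in
  [/\ 4 / Lest <= g ->
        f xk1 - f xk <= - (1 / (2 * Num.sqrt Lest)) * (g * Num.sqrt g),
      g <= 4 / Lest ->
        f xk1 - f xk <= - (1 / 4) * g ^+ 2
    & forall c1 : R, 0 < c1 -> c1 <= 1 -> 4 * c1 / Lest <= g ->
        f xk1 - f xk <= - (Num.sqrt c1 / (2 * Num.sqrt Lest)) * (g * Num.sqrt g)].
Proof.
move=> _ hess_posdef Lalt_gt0 f_cubic Lalt_le grad_neq0 g xk1.
have Lest_gt0 : 0 < Lest by apply: lt_le_trans Lalt_le.
have g_gt0 : 0 < g := dnorm_gt0 hess_posdef xk grad_neq0.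
have decrease : f xk1 - f xk <= - (aicn_alpha Lest g * g ^+ 2) / 2.
  by apply: aicn_step_decrease; rewrite // ltW.
have sqrt_case c1 : 0 < c1 <= 1 -> 4 * c1 / Lest <= g ->
    f xk1 - f xk <= - (Num.sqrt c1 / (2 * Num.sqrt Lest)) * (g * Num.sqrt g).
  move=> c1_01 c1g; apply: le_trans decrease _.
  by rewrite !mulNr lerN2 sqrt_rate_le_aicn_gain.
split.
- by move=> g_ge; have := sqrt_case 1; rewrite sqrtr1 mulr1 ltr01 lexx; apply.
- move=> g_le; apply: le_trans decrease _.
  have : 2^-1 <= aicn_alpha Lest g.
    by apply: aicn_alpha_ge_half; rewrite // mulrC -ler_pdivlMr.
  have := sqr_ge0 g; nra.
- by move=> c1 c1_gt0 c1_le1; apply: sqrt_case; rewrite c1_gt0.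
Qed.
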